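(* Let $\{d_i,\mathcal F_i\}_{i=1}^n$ be a martingale difference sequence. Let $v_{i-1}$ be $\mathcal F_{i-1}$-measurable random variables such that $\mathbb E[\exp(\lambda d_i)\mid\mathcal F_{i-1}]\le\exp\!\left(\frac{\lambda^2}{2}v_{i-1}\right)$ for all $\lambda>0$ and all $i\in[n]$. Define $S_n=\sum_{i=1}^n d_i$ and $V_n=\sum_{i=1}^n v_{i-1}$. Let $\delta\in(0,1)$ and suppose there are positive values $R(\delta)$ and $\alpha_1,\dots,\alpha_n$ such that $\Pr\!\left[V_n\le\sum_{i=1}^n\alpha_id_i+R(\delta)\right]\ge1-\delta$. Then for every $x>0$, \[ \Pr[S_n\ge x]\le\delta+\exp\!\left(-\frac{x^2}{4\left(\max_{i\in[n]}\alpha_i\right)x+8R(\delta)}\right). \]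
   Context: $[n]=\{1,\dots,n\}$. *)

From HB Require Import structures.
From mathcomp Require Import all_boot all_order all_algebra.
From mathcomp Require Import all_classical all_reals all_analysis.
Set Implicit Arguments. Unset Strict Implicit. Unset Printing Implicit Defensive.
Import Order.TTheory GRing.Theory Num.Theory.
Local Open Scope classical_set_scope.
Local Open Scope ring_scope.

Section Defs.
Context (d : measure_display) (T : measurableType d) (R : realType).

Definition filtration (F : nat -> set (set T)) : Prop :=
  (forall i, sigma_algebra setT (F i)) /\
  (forall i A, F i A -> measurable A) /\
  (forall i j A, (i <= j)%N -> F i A -> F j A).

Definition Gmeasurable (G : set (set T)) (f : T -> R) : Prop :=
  forall B : set R, measurable B -> G (f @^-1` B).

Definition cond_exp_version (P : probability T R) (G : set (set T))
    (X g : T -> R) : Prop :=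
  Gmeasurable G g /\
  (forall A, G A ->
     (\int[P]_(x in A) (g x)%:E = \int[P]_(x in A) (X x)%:E)%E).

Definition mds (P : probability T R) (F : nat -> set (set T))
    (dd : nat -> T -> R) (n : nat) : Prop :=
  forall i, (1 <= i <= n)%N ->
    [/\ Gmeasurable (F i) (dd i),
        P.-integrable setT (EFin \o dd i) &
        exists g, cond_exp_version P (F i.-1) (dd i) g /\
                  {ae P, forall x, g x = 0}].

End Defs.

From HB Require Import structures.
From mathcomp Require Import all_boot all_order all_algebra.
From mathcomp Require Import all_classical all_reals all_analysis.
From mathcomp Require Import measurable_realfun ring lra.
Import Order.TTheory GRing.Theory Num.Theory HBNNSimple.
Local Open Scope classical_set_scope.
Local Open Scope ring_scope.

(* Put c = 2 lam^2 and lam_i = lam + c alpha_i.  If 2 lam alpha_i <= 1 then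
   lam_i <= 2 lam, hence lam_i^2 / 2 <= c, and since the v_(i-1) are a.s.
   nonnegative the conditional mgf bound makes
   exp (sum_(i <= k) (lam_i d_i - c v_(i-1))) a supermartingale of mean <= 1.
   Its exponent equals lam S_n + c (sum_i alpha_i d_i - V_n), which is at least
   lam x - c R(delta) on {S_n >= x} /\ {V_n <= sum_i alpha_i d_i + R(delta)};
   Markov's inequality bounds that event by exp (c R(delta) - lam x), and the
   complement of the second event has probability at most delta.  Finally
   lam = x / (2 A x + 4 R(delta)), with A the largest alpha_i, gives
   lam x - c R(delta) >= x^2 / (4 A x + 8 R(delta)). *)

Lemma measurable_sum_in d (T : measurableType d) (R : realType) (D : set T)
    (I : eqType) (s : seq I) (h : I -> T -> R) :
  (forall i, i \in s -> measurable_fun D (h i)) ->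
  measurable_fun D (fun x => \sum_(i <- s) h i x).
Proof.
elim: s => [_|i s IH mh].
  by under eq_fun do rewrite big_nil; exact: measurable_cst.
under eq_fun do rewrite big_cons; apply: measurable_funD.
  by apply: mh; rewrite mem_head.
by apply: IH => j js; apply: mh; rewrite in_cons js orbT.
Qed.

Section Gmeasurable.
Context {d : measure_display} {T : measurableType d} {R : realType}.
Implicit Types (G : set (set T)) (f : T -> R).

Lemma GmeasurableP G f : sigma_algebra setT G ->
  Gmeasurable G f <-> measurable_fun setT (f : g_sigma_algebraType G -> R).
Proof.
move=> sG; split => [Gf _ B mB|mf B mB].
  by rewrite setTI measurable_g_measurableTypeE //; exact: Gf.
by have := mf measurableT B mB; rewrite setTI measurable_g_measurableTypeE.
Qed.

Lemma Gmeasurable_measurable {G f} : (forall A, G A -> measurable A) ->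
  Gmeasurable G f -> measurable_fun setT f.
Proof. by move=> GA Gf _ B mB; rewrite setTI; apply: GA; exact: Gf. Qed.

Lemma Gmeasurable_sub {G G' f} : G `<=` G' -> Gmeasurable G f -> Gmeasurable G' f.
Proof. by move=> GG' Gf B mB; apply: GG'; exact: Gf. Qed.

End Gmeasurable.

Section integral_comparison.
Context {d : measure_display} {T : measurableType d} {R : realType}.
Variable mu : {measure set T -> \bar R}.
Local Open Scope ereal_scope.

Lemma ae_le_integral_ge0r (A : set T) (f h : T -> R) : measurable A ->
  measurable_fun A f -> measurable_fun A h -> (forall x, A x -> 0 <= h x)%R ->
  {ae mu, forall x, A x -> f x <= h x}%R ->
  \int[mu]_(x in A) (f x)%:E <= \int[mu]_(x in A) (h x)%:E.
Proof.
move=> mA mf mh h0 fh; rewrite integralE.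
apply: (@le_trans _ _ (\int[mu]_(x in A) (EFin \o f)^\+ x)).
  by rewrite -[leRHS]sube0 leeB // integral_ge0 // => x _; exact: funeneg_ge0.
apply: ae_ge0_le_integral => //.
- by apply: measurable_funepos; exact/measurable_EFinP.
- exact/measurable_EFinP.
apply: filterS fh => x fhx Ax.
by rewrite funeposE /= -EFin_max lee_fin ge_max fhx // h0.
Qed.

Lemma integral_mul_indic (A : set T) (Z : T -> R) :
  \int[mu]_x (\1_A x * Z x)%:E = \int[mu]_(x in A) (Z x)%:E.
Proof.
rewrite [RHS]integral_mkcond; apply: eq_integral => x _.
by rewrite patchE indicE; case: ifPn => _; rewrite ?mul1r ?mul0r.
Qed.

Lemma cvg_integral_approx_mul {Y Z : T -> R} :
  measurable_fun setT Y -> (forall x, 0 <= Y x)%R ->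
  measurable_fun setT Z -> (forall x, 0 <= Z x)%R ->
  \int[mu]_x (approx setT (EFin \o Y) n x * Z x)%:E @[n --> \oo] -->
  \int[mu]_x (Y x * Z x)%:E.
Proof.
move=> mY Y0 mZ Z0.
have mEY : measurable_fun setT (EFin \o Y) by exact/measurable_EFinP.
have nd_approxY x :
    {homo approx setT (EFin \o Y) ^~ x : m k / (m <= k)%N >-> (m <= k)%R}.
  by move=> m k mk; have /lefP := nd_approx setT (EFin \o Y) mk; apply.
have approx_ge0 k x : (0 <= approx setT (EFin \o Y) k x)%R.
  by rewrite /approx addr_ge0 ?mulr_ge0 ?sumr_ge0 // => i _; rewrite !mulr_ge0.
rewrite [X in _ --> X](_ : _ =
    \int[mu]_x limn (fun k => (approx setT (EFin \o Y) k x * Z x)%:E)).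
  apply: cvg_monotone_convergence => //.
  - move=> k; apply/measurable_EFinP; apply: measurable_funM => //.
    by rewrite -(nnsfun_approxE measurableT mEY).
  - by move=> k x _; rewrite lee_fin mulr_ge0.
  - by move=> x _ m k mk; rewrite lee_fin ler_wpM2r // nd_approxY.
apply: eq_integral => x _; apply/esym/cvg_lim => //; apply: cvg_EFin; first exact: nearW.
apply: cvgMr_tmp.
exact: (@cvg_approx _ T R setT (EFin \o Y) x (fun x _ => Y0 x) I (ltry _)).
Qed.

End integral_comparison.

Section integral_mul_le.
Context {d : measure_display} {T : measurableType d} {R : realType}.
Variable mu : {measure set T -> \bar R}.
Variables (G : set (set T)) (X H : T -> R).
Hypothesis measG : forall A, G A -> measurable A.
Hypotheses (mX : measurable_fun setT X) (mH : measurable_fun setT H).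
Hypotheses (X0 : forall x, 0 <= X x) (H0 : forall x, 0 <= H x).
Hypothesis leXH : forall A, G A ->
  (\int[mu]_(x in A) (X x)%:E <= \int[mu]_(x in A) (H x)%:E)%E.
Local Open Scope ereal_scope.

Lemma integral_indic_mul_le (r : R) A : (0 <= r)%R -> G A ->
  \int[mu]_x (r * \1_A x * X x)%:E <= \int[mu]_x (r * \1_A x * H x)%:E.
Proof.
move=> r0 GA; have mA := measG _ GA.
have rE (Z : T -> R) : measurable_fun setT Z -> (forall x, 0 <= Z x)%R ->
    \int[mu]_x (r * \1_A x * Z x)%:E = r%:E * \int[mu]_(x in A) (Z x)%:E.
  move=> mZ Z0; under eq_integral do rewrite -mulrA EFinM.
  rewrite ge0_integralZl_EFin ?integral_mul_indic // => [x _|].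
    by rewrite lee_fin mulr_ge0.
  by apply/measurable_EFinP; apply: measurable_funM.
by rewrite !rE // lee_wpmul2l ?lee_fin // leXH.
Qed.

Lemma integral_mulD_le (Y1 Y2 : T -> R) :
  measurable_fun setT Y1 -> measurable_fun setT Y2 ->
  (forall x, 0 <= Y1 x)%R -> (forall x, 0 <= Y2 x)%R ->
  \int[mu]_x (Y1 x * X x)%:E <= \int[mu]_x (Y1 x * H x)%:E ->
  \int[mu]_x (Y2 x * X x)%:E <= \int[mu]_x (Y2 x * H x)%:E ->
  \int[mu]_x ((Y1 x + Y2 x) * X x)%:E <= \int[mu]_x ((Y1 x + Y2 x) * H x)%:E.
Proof.
move=> mY1 mY2 Y10 Y20 le1 le2.
have mYZ (Y Z : T -> R) : measurable_fun setT Y -> measurable_fun setT Z ->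
    measurable_fun setT (fun x => (Y x * Z x)%:E).
  by move=> mY mZ; apply/measurable_EFinP; exact: measurable_funM.
under eq_integral do rewrite mulrDl EFinD.
under [leRHS]eq_integral do rewrite mulrDl EFinD.
rewrite !ge0_integralD //; try by [exact: mYZ | move=> x _; rewrite lee_fin mulr_ge0].
exact: leeD.
Qed.

Lemma integral_sum_mul_le (I : Type) (s : seq I) (Y : I -> T -> R) :
  (forall i, measurable_fun setT (Y i)) -> (forall i x, 0 <= Y i x)%R ->
  (forall i, \int[mu]_x (Y i x * X x)%:E <= \int[mu]_x (Y i x * H x)%:E) ->
  \int[mu]_x ((\sum_(i <- s) Y i x) * X x)%:E <=
    \int[mu]_x ((\sum_(i <- s) Y i x) * H x)%:E.
Proof.
move=> mY Y0 leY; elim: s => [|i s IH].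
  under eq_integral do rewrite big_nil mul0r.
  by under [leRHS]eq_integral do rewrite big_nil mul0r.
under eq_integral do rewrite big_cons; under [leRHS]eq_integral do rewrite big_cons.
apply: integral_mulD_le => //; first exact: measurable_sum.
by move=> x; apply: sumr_ge0.
Qed.

Lemma G_dyadic_approx (Y : T -> R) n k : Gmeasurable G Y ->
  G (dyadic_approx setT (EFin \o Y) n k).
Proof.
move=> GY; rewrite /dyadic_approx; case: ifPn => _; last first.
  by have := GY _ measurable0; rewrite preimage_set0.
rewrite (_ : _ `&` _ = Y @^-1` [set` dyadic_itv R n k]).
  by apply: GY; exact: measurable_itv.
apply/seteqP; split => x /=; first by case=> _; rewrite inE => -[r rI [<-]].
by move=> Ix; split => //; rewrite inE; exists (Y x).
Qed.

Lemma G_integer_approx (Y : T -> R) n : Gmeasurable G Y ->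
  G (integer_approx setT (EFin \o Y) n).
Proof.
move=> GY; rewrite (_ : integer_approx _ _ _ = Y @^-1` `[n%:R, +oo[).
  by apply: GY; exact: measurable_itv.
apply/seteqP; split => x; rewrite /integer_approx /= in_itv /= andbT lee_fin.
  by case.
by split.
Qed.

Lemma integral_approx_mul_le (Y : T -> R) n : Gmeasurable G Y ->
  \int[mu]_x (approx setT (EFin \o Y) n x * X x)%:E <=
    \int[mu]_x (approx setT (EFin \o Y) n x * H x)%:E.
Proof.
move=> GY; have mindic A : G A -> measurable_fun setT (\1_A : T -> R).
  by move=> GA; apply: measurable_indic; exact: measG.
rewrite /approx; apply: integral_mulD_le.
- apply: measurable_sum => k; apply: measurable_funM => //.
  exact/mindic/G_dyadic_approx.
- by apply: measurable_funM => //; exact/mindic/G_integer_approx.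
- by move=> x; apply: sumr_ge0 => k _; rewrite !mulr_ge0.
- by move=> x; rewrite mulr_ge0.
- apply: integral_sum_mul_le => [k|k x|k].
  + by apply: measurable_funM => //; exact/mindic/G_dyadic_approx.
  + by rewrite !mulr_ge0.
  + by apply: integral_indic_mul_le => //; exact: G_dyadic_approx.
- by apply: integral_indic_mul_le => //; exact: G_integer_approx.
Qed.

Lemma integral_mul_le (Y : T -> R) : Gmeasurable G Y -> (forall x, 0 <= Y x)%R ->
  \int[mu]_x (Y x * X x)%:E <= \int[mu]_x (Y x * H x)%:E.
Proof.
move=> GY Y0; have mY := Gmeasurable_measurable measG GY.
have cvgX := cvg_integral_approx_mul mu mY Y0 mX X0.
have cvgH := cvg_integral_approx_mul mu mY Y0 mH H0.
rewrite -(cvg_lim _ cvgX) // -(cvg_lim _ cvgH) //.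
apply: lee_lim; [exact: cvgP cvgX | exact: cvgP cvgH |].
by apply: nearW => k; exact: integral_approx_mul_le.
Qed.

End integral_mul_le.

Section measure_bounds.
Context {d : measure_display} {T : measurableType d} {R : realType}.
Local Open Scope ereal_scope.

Lemma ae_notin_integral_lt1 (mu : {finite_measure set T -> \bar R}) (A : set T)
    (f : T -> R) : measurable A -> measurable_fun A f ->
  (forall x, A x -> 0 <= f x < 1)%R -> mu A <= \int[mu]_(x in A) (f x)%:E ->
  {ae mu, forall x, ~ A x}.
Proof.
move=> mA mf f01 muAf.
have mf1 : measurable_fun A (EFin \o (fun x => 1 - f x)%R).
  by apply/measurable_EFinP; apply: measurable_funB.
have intf : mu.-integrable A (EFin \o f).
  apply: (@le_integrable _ _ _ _ _ mA _ (EFin \o cst 1%R)) => //.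
  - exact/measurable_EFinP.
  - move=> x Ax /=; have /andP[f0 f1] := f01 x Ax.
    by rewrite lee_fin normr1 ger0_norm // ltW.
  - exact: finite_measure_integrable_cst.
have : ae_eq mu A (EFin \o (fun x => 1 - f x)%R) (cst 0).
  apply/(ae_eq_integral_abs mu mA mf1)/eqP; rewrite eq_le integral_ge0 // andbT.
  rewrite (eq_integral (fun x => (1 - f x)%:E)) => [|x /[!inE] Ax]; last first.
    by have /andP[_ f1] := f01 x Ax; rewrite /= gtr0_norm // subr_gt0.
  under eq_integral do rewrite EFinB.
  rewrite integralB_EFin //; last exact: finite_measure_integrable_cst.
  by rewrite integral_cst // mul1e sube_le0.
apply: filterS => x fx Ax; move: (fx Ax) => /= [] /eqP; rewrite subr_eq0.
by have /andP[_ f1] := f01 x Ax; rewrite (gt_eqF f1).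
Qed.

Lemma measure_le_expR (mu : {measure set T -> \bar R}) (Z : T -> R) (E : set T)
    (a : R) : measurable E -> measurable_fun setT Z ->
  (forall w, E w -> a <= Z w)%R -> \int[mu]_w (expR (Z w))%:E <= 1 ->
  mu E <= (expR (- a))%:E.
Proof.
move=> mE mZ aZ intZ.
have mexpZ : measurable_fun setT (EFin \o expR \o Z).
  by apply/measurable_EFinP; exact: measurableT_comp.
rewrite expRN -(mule1 (_^-1)%:E) lee_pdivlMl ?expR_gt0 //.
apply: le_trans intZ.
apply: le_trans (ge0_subset_integral mu mE measurableT mexpZ _ _) => //.
- rewrite -integral_cst //; apply: ge0_le_integral => //.
  + by move=> w _; rewrite lee_fin expR_ge0.
  + exact: measurable_funS mexpZ.
  + by move=> w Ew; rewrite lee_fin ler_expR aZ.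
- by move=> w _; rewrite lee_fin expR_ge0.
Qed.

End measure_bounds.

Lemma weight_sqr_le (R : realFieldType) (lam a : R) :
  0 <= lam -> 0 <= a -> 2 * lam * a <= 1 ->
  (lam + 2 * lam ^+ 2 * a) ^+ 2 / 2 <= 2 * lam ^+ 2.
Proof.
move=> lam0 a0 lama; have le2lam : lam + 2 * lam ^+ 2 * a <= 2 * lam by nra.
have ge0 : 0 <= lam + 2 * lam ^+ 2 * a by nra.
rewrite ler_pdivrMr //; nra.
Qed.

Lemma chernoff_exponent_ge {R : realFieldType} {A x r : R} :
  0 <= A -> 0 < x -> 0 < r ->
  let lam := x / (2 * A * x + 4 * r) in
  2 * lam * A <= 1 /\
  x ^+ 2 / (4 * A * x + 8 * r) <= lam * x - 2 * lam ^+ 2 * r.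
Proof.
move=> A0 x0 r0 lam; have D0 : 0 < 2 * A * x + 4 * r by nra.
split; first by rewrite /lam mulrAC mulrA ler_pdivrMr // mul1r; nra.
rewrite -subr_ge0 (_ : _ - _ = A * x ^+ 3 / (2 * A * x + 4 * r) ^+ 2).
  by rewrite divr_ge0 ?mulr_ge0 // ?exprn_ge0 // ltW.
by rewrite /lam; field; rewrite gt_eqF //; nra.
Qed.

Lemma mgf_bound_ae_ge0 {d : measure_display} {T : measurableType d} {R : realType}
    (P : probability T R) (G : set (set T)) (D V g0 g : T -> R) (lam : R) :
  (forall A, G A -> measurable A) -> 0 < lam ->
  P.-integrable setT (EFin \o D) -> Gmeasurable G V ->
  cond_exp_version P G D g0 -> {ae P, forall w, g0 w = 0} ->
  cond_exp_version P G (fun w => expR (lam * D w)) g ->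
  {ae P, forall w, g w <= expR (lam ^+ 2 / 2 * V w)} ->
  {ae P, forall w, 0 <= V w}.
Proof.
move=> measG lam0 intD GV [Gg0 g0E] g00 [Gg gE] gle.
pose A := [set w | V w < 0].
have GA : G A.
  rewrite (_ : A = V @^-1` `]-oo, 0[); first by apply: GV; exact: measurable_itv.
  by apply/seteqP; split => w /=; rewrite in_itv.
have mA := measG _ GA.
have mD : measurable_fun setT D by case/integrableP: intD => /measurable_EFinP.
have mV := Gmeasurable_measurable measG GV.
have mTA (f : T -> R) : measurable_fun setT f -> measurable_fun A f.
  by move=> mf; exact: measurable_funS measurableT (subsetT A) mf.
have mexp (f : T -> R) :
    measurable_fun setT f -> measurable_fun A (fun w => expR (f w)).
  by move=> mf; apply: mTA; exact: measurableT_comp.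
(* On [A]: P A = E[1 + lam D; A] <= E[exp (lam D); A] <= E[exp (lam^2/2 V); A],
   an integral of a function < 1 on A, so A is negligible. *)
have intA : (\int[P]_(w in A) (1 + lam * D w)%:E = P A)%E.
  have intDA : P.-integrable A (EFin \o D) by apply: integrableS intD.
  under eq_integral do rewrite EFinD EFinM.
  rewrite integralD // ?integral_cst // ?mul1e; last 2 first.
  - exact: finite_measure_integrable_cst.
  - exact: integrableZl.
  rewrite integralZl // -g0E // (ae_eq_integral (cst 0)) ?integral0 ?mule0 ?adde0 //.
  - by apply/measurable_EFinP/mTA; exact: Gmeasurable_measurable measG Gg0.
  - by apply: filterS g00 => w g0w _; rewrite /= g0w.
have PA_le : (P A <= \int[P]_(w in A) (expR (lam ^+ 2 / 2 * V w))%:E)%E.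
  apply: (@le_trans _ _ (\int[P]_(w in A) (1 + lam * D w)%:E)%E).
    by rewrite intA.
  apply: (@le_trans _ _ (\int[P]_(w in A) (expR (lam * D w))%:E)%E).
    apply: ae_le_integral_ge0r => //; last by apply: aeW => w _; exact: expR_ge1Dx.
    - by apply: mTA; apply: measurable_funD => //; exact: measurable_funM.
    - exact/mexp/measurable_funM.
  rewrite -gE //; apply: ae_le_integral_ge0r => //.
  - by apply: mTA; exact: Gmeasurable_measurable measG Gg.
  - exact/mexp/measurable_funM.
  - by apply: filterS gle => w gw _.
suff : {ae P, forall w, ~ A w} by apply: filterS => w /= /negP; rewrite -leNgt.
apply: (ae_notin_integral_lt1 P A _ mA _ _ PA_le).
- exact/mexp/measurable_funM.
- by move=> w /= Vw; rewrite expR_ge0 expR_lt1 pmulr_rlt0 // divr_gt0 // exprn_gt0.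
Qed.

Section exponential_supermartingale.
Context {d : measure_display} {T : measurableType d} {R : realType}.
Context {P : probability T R} {F : nat -> set (set T)} {n : nat}.
Context {dd v : nat -> T -> R}.
Hypothesis hF : filtration F.
Hypothesis hmds : mds P F dd n.
Hypothesis Gv : forall i, (1 <= i <= n)%N -> Gmeasurable (F i.-1) (v i.-1).
Hypothesis mgf_bound : forall lam : R, 0 < lam -> forall i, (1 <= i <= n)%N ->
  exists g, cond_exp_version P (F i.-1) (fun w => expR (lam * dd i w)) g /\
    {ae P, forall w, g w <= expR (lam ^+ 2 / 2 * v i.-1 w)}.

Let sigmaF k : sigma_algebra setT (F k). Proof. by case: hF. Qed.
Let measF {k A} : F k A -> measurable A. Proof. by case: hF => _ [+ _]; apply. Qed.
Let monoF {i j} : (i <= j)%N -> F i `<=` F j.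
Proof. by case: hF => _ [_ + ij A]; apply. Qed.

Let Gdd {i k} : (1 <= i <= n)%N -> (i <= k)%N -> Gmeasurable (F k) (dd i).
Proof. by move=> hi ik; apply: Gmeasurable_sub (monoF ik) _; case: (hmds _ hi). Qed.

Let Gv_le {i k} : (1 <= i <= n)%N -> (i <= k.+1)%N -> Gmeasurable (F k) (v i.-1).
Proof.
move=> hi ik; apply: Gmeasurable_sub (Gv _ hi); apply: monoF.
by rewrite -ltnS prednK //; case/andP: hi.
Qed.

Lemma v_ge0 i : (1 <= i <= n)%N -> {ae P, forall w, 0 <= v i.-1 w}.
Proof.
move=> hi; have [_ intd [g0 [Eg0 g00]]] := hmds _ hi.
have [g [Eg gle]] := mgf_bound _ ltr01 _ hi.
exact: mgf_bound_ae_ge0 (@measF i.-1) ltr01 intd (Gv _ hi) Eg0 g00 Eg gle.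
Qed.

Lemma integral_expR_mds_le {i lam c} : (1 <= i <= n)%N ->
  0 < lam -> lam ^+ 2 / 2 <= c -> forall A, F i.-1 A ->
  (\int[P]_(w in A) (expR (lam * dd i w))%:E <=
   \int[P]_(w in A) (expR (c * v i.-1 w))%:E)%E.
Proof.
move=> hi lam0 lamc A FA; have [g [[Gg gE] gle]] := mgf_bound _ lam0 _ hi.
have mFA := measF FA.
rewrite -gE //; apply: ae_le_integral_ge0r => //.
- apply: measurable_funS measurableT (subsetT A) _.
  exact: Gmeasurable_measurable (@measF i.-1) Gg.
- apply: measurable_funS measurableT (subsetT A) _; apply: measurableT_comp => //.
  exact/measurable_funM/(Gmeasurable_measurable (@measF i.-1) (Gv _ hi)).
apply: filterS2 gle (v_ge0 _ hi) => w gw vw _; apply: le_trans gw _.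
by rewrite ler_expR ler_wpM2r.
Qed.

Lemma integral_expR_sum_le1 (lam : nat -> R) (c : R) k :
  (forall i, (1 <= i <= n)%N -> 0 < lam i) ->
  (forall i, (1 <= i <= n)%N -> lam i ^+ 2 / 2 <= c) -> (k <= n)%N ->
  (\int[P]_w (expR (\sum_(1 <= i < k.+1) (lam i * dd i w - c * v i.-1 w)))%:E
   <= 1)%E.
Proof.
move=> lam0 lamc; elim: k => [_|k IH kn].
  under eq_integral do rewrite big_geq // expR0.
  by rewrite integral_cst // mul1e probability_le1.
have hk : (1 <= k.+1 <= n)%N by rewrite kn.
pose Z w := \sum_(1 <= i < k.+1) (lam i * dd i w - c * v i.-1 w).
have GY : Gmeasurable (F k) (fun w => expR (Z w - c * v k w)).
  apply/GmeasurableP => //; apply: measurableT_comp => //.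
  apply: measurable_funB; last first.
    by apply: measurable_funM => //; apply/GmeasurableP => //; exact: Gv_le hk _.
  apply: measurable_sum_in => i; rewrite mem_index_iota => /andP[i1 ik].
  have hi : (1 <= i <= n)%N by rewrite i1 ltnW // (leq_trans ik kn).
  apply: measurable_funB; apply: measurable_funM => //; apply/GmeasurableP => //.
  - exact: Gdd.
  - exact: Gv_le (ltnW ik).
have ZE w : \sum_(1 <= i < k.+2) (lam i * dd i w - c * v i.-1 w) =
    Z w - c * v k w + lam k.+1 * dd k.+1 w.
  by rewrite big_nat_recr //= addrA addrAC.
under eq_integral do rewrite ZE expRD.
apply: le_trans (IH (ltnW kn)).
pose X w := expR (lam k.+1 * dd k.+1 w); pose H w := expR (c * v k w).
apply: (le_trans (@integral_mul_le _ _ _ P (F k) X H (@measF k) _ _ _ _ _ _ GY _)) => //.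
- apply: measurableT_comp => //; apply: measurable_funM => //.
  exact: Gmeasurable_measurable (@measF k.+1) (Gdd hk _).
- apply: measurableT_comp => //; apply: measurable_funM => //.
  exact: Gmeasurable_measurable (@measF k) (Gv_le hk _).
- by move=> w; exact: expR_ge0.
- by move=> w; exact: expR_ge0.
- exact: integral_expR_mds_le hk (lam0 _ hk) (lamc _ hk).
by under eq_integral do rewrite -expRD subrK.
Qed.

Lemma weighted_tail_bound {lam c r x delta : R} {alpha : nat -> R} :
  0 < lam -> 0 <= c -> (forall i, (1 <= i <= n)%N -> 0 <= alpha i) ->
  (forall i, (1 <= i <= n)%N -> (lam + c * alpha i) ^+ 2 / 2 <= c) ->
  ((1 - delta)%:E <= P [set w | (\sum_(1 <= i < n.+1) v i.-1 w
                        <= \sum_(1 <= i < n.+1) alpha i * dd i w + r)%R])%E ->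
  (P [set w | (x <= \sum_(1 <= i < n.+1) dd i w)%R]
   <= (delta + expR (- (lam * x - c * r)))%:E)%E.
Proof.
move=> lam0 c0 alpha0 lamc hgood.
have msum (h : nat -> T -> R) :
    (forall i, (1 <= i <= n)%N -> measurable_fun setT (h i)) ->
    measurable_fun setT (fun w => \sum_(1 <= i < n.+1) h i w).
  by move=> mh; apply: measurable_sum_in => i; rewrite mem_index_iota ltnS; exact: mh.
have mdd i : (1 <= i <= n)%N -> measurable_fun setT (dd i).
  by move=> hi; exact: Gmeasurable_measurable (@measF i) (Gdd hi (leqnn i)).
have mv i : (1 <= i <= n)%N -> measurable_fun setT (v i.-1).
  by move=> hi; exact: Gmeasurable_measurable (@measF i.-1) (Gv _ hi).
set Good := [set w | _ <= _ + r] in hgood *.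
set Tail := [set w | x <= _].
have mGood : measurable Good.
  rewrite -[Good]setTI; apply: measurable_fun_le => //; first exact: msum.
  apply: measurable_funD => //; apply: msum => i hi.
  by apply: measurable_funM => //; exact: mdd.
have mTail : measurable Tail.
  by rewrite -[Tail]setTI; apply: measurable_fun_le => //; exact: msum.
rewrite (measureDI P mTail mGood) EFinD leeD //.
  apply: (@le_trans _ _ (P (~` Good))).
    apply: le_measure; rewrite ?inE; [exact: measurableD | exact: measurableC |].
    by move=> w [].
  rewrite probability_setC //; apply: le_trans (leeB (lexx 1%E) hgood) _.
  by rewrite -EFinB lee_fin; lra.
apply: (measure_le_expR P (fun w => \sum_(1 <= i < n.+1)
                              ((lam + c * alpha i) * dd i w - c * v i.-1 w))).
- exact: measurableI.
- apply: msum => i hi; apply: measurable_funB; apply: measurable_funM => //.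
  + exact: mdd.
  + exact: mv.
- move=> w []; rewrite /Tail /Good /= => Tw Gw.
  have -> : \sum_(1 <= i < n.+1) ((lam + c * alpha i) * dd i w - c * v i.-1 w) =
      lam * \sum_(1 <= i < n.+1) dd i w +
      c * (\sum_(1 <= i < n.+1) alpha i * dd i w - \sum_(1 <= i < n.+1) v i.-1 w).
    by rewrite mulrBr !mulr_sumr -sumrB -big_split /=; apply: eq_bigr => i _; ring.
  have : lam * x <= lam * \sum_(1 <= i < n.+1) dd i w by rewrite ler_wpM2l // ltW.
  have : c * (- r) <= c * (\sum_(1 <= i < n.+1) alpha i * dd i w
                             - \sum_(1 <= i < n.+1) v i.-1 w).
    by rewrite ler_wpM2l //; lra.
  lra.
- apply: integral_expR_sum_le1 (leqnn n) => // i hi.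
  by rewrite ltr_wpDr // mulr_ge0 // alpha0.
Qed.

End exponential_supermartingale.

Theorem lemmaC3 (d : measure_display) (T : measurableType d) (R : realType)
  (P : probability T R) (F : nat -> set (set T)) (n : nat)
  (dd : nat -> T -> R) (v : nat -> T -> R)
  (delta Rd : R) (alpha : nat -> R) :
  filtration F ->
  mds P F dd n ->
  (forall i, (1 <= i <= n)%N -> Gmeasurable (F i.-1) (v i.-1)) ->
  (forall lam : R, 0 < lam -> forall i, (1 <= i <= n)%N ->
     exists g, cond_exp_version P (F i.-1) (fun w => expR (lam * dd i w)) g /\
       {ae P, forall w, g w <= expR (lam ^+ 2 / 2 * v i.-1 w)}) ->
  0 < delta < 1 ->
  0 < Rd ->
  (forall i, (1 <= i <= n)%N -> 0 < alpha i) ->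
  (P [set w | (\sum_(1 <= i < n.+1) v i.-1 w
              <= \sum_(1 <= i < n.+1) alpha i * dd i w + Rd)%R]
     >= (1 - delta)%:E)%E ->
  forall x : R, 0 < x ->
  (P [set w | (\sum_(1 <= i < n.+1) dd i w >= x)%R]
     <= (delta + expR (- (x ^+ 2 / (4 * (\big[Num.max/0]_(1 <= i < n.+1) alpha i) * x
                                    + 8 * Rd))))%:E)%E.
Proof.
move=> hF hmds hv hmgf _ Rd0 alpha0 hgood x x0.
set A := \big[Num.max/0]_(1 <= i < n.+1) alpha i.
have alphaA i : (1 <= i <= n)%N -> 0 <= alpha i <= A.
  by move=> hi; rewrite ltW ?alpha0 //= le_bigmax_seq // mem_index_iota.
have A0 : 0 <= A := bigmax_ge_id _ _ _ _.
have [lamA expo_ge] := chernoff_exponent_ge A0 x0 Rd0.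
set lam := x / _ in lamA expo_ge.
have lam0 : 0 < lam by rewrite divr_gt0 //; nra.
apply: le_trans (weighted_tail_bound hF hmds hv hmgf (c := 2 * lam ^+ 2)
                   lam0 _ _ _ hgood) _.
- by rewrite mulr_ge0 // exprn_ge0 // ltW.
- by move=> i /alphaA /andP[].
- move=> i /alphaA /andP[a0 aA]; apply: weight_sqr_le => //; first exact: ltW.
  by apply: le_trans lamA; rewrite ler_wpM2l // mulr_ge0 // ltW.
by rewrite lee_fin lerD2l ler_expR lerN2.
Qed.
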